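(* Let $\mathcal{F}$ be a saturated fusion system on a finite $p$-group $P$, and let $Q\le P$ be $\mathcal{F}$-essential of rank $r$. Then $\mathrm{Out}_{\mathcal{F}}(Q)\cong\mathrm{Aut}_{\mathcal{F}}(Q/\Phi(Q))\le\mathrm{GL}(r,p)$ and $|\mathrm{N}_P(Q)/Q|\le p^{r(r-1)/2}$. Moreover $\mathrm{N}_P(Q)/Q$ has nilpotency class at most $r-1$ and exponent at most $p^{\lceil\log_p r\rceil}$. In particular $|\mathrm{N}_P(Q)/Q|=p$ if $r=2$.
   Context: Rank of a $p$-group $Q$: $r$ with $|Q:\Phi(Q)|=p^r$. $\mathrm{Aut}_{\mathcal{F}}(Q/\Phi(Q))$ denotes the image of $\mathrm{Aut}_{\mathcal{F}}(Q)$ in $\mathrm{Aut}(Q/\Phi(Q))$. A subgroup $Q\le P$ is $\mathcal{F}$-essential if (i) it is fully $\mathcal{F}$-normalized, (ii) $\mathcal{F}$-centric, (iii) $\mathrm{Out}_{\mathcal{F}}(Q)=\mathrm{Aut}_{\mathcal{F}}(Q)/\mathrm{Inn}(Q)$ contains a strongly $p$-embedded subgroup $H$ ($p\mid|H|$, $p\nmid|\mathrm{Out}_{\mathcal{F}}(Q):H|>1$, $p\nmid|H\cap{}^xH|$ for $x\notin H$). *)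

From HB Require Import structures.
From mathcomp Require Import all_boot all_fingroup all_solvable all_algebra.
Set Implicit Arguments. Unset Strict Implicit. Unset Printing Implicit Defensive.
Local Open Scope group_scope.

(* A (candidate) fusion system on gT: [F Q f] means that the restriction of
   f to Q is a morphism of F with domain Q (and codomain P; any subgroup R
   containing f @: Q can serve as codomain, i.e. Hom_F(Q,R) is
   [set f | F Q f & f @: Q \subset R]). Values of f outside Q are irrelevant. *)
Definition fsys (gT : finGroupType) := {set gT} -> {ffun gT -> gT} -> bool.

Definition conjf (gT : finGroupType) (g : gT) : {ffun gT -> gT} := [ffun x => x ^ g].

Definition homF (gT : finGroupType) (F : fsys gT) (Q R : {set gT}) (f : {ffun gT -> gT}) :=
  F Q f && (f @: Q \subset R).

Record is_fusion_system (gT : finGroupType) (P : {group gT}) (F : fsys gT) : Prop := {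
  fs_dom : forall Q f, F Q f -> group_set Q && (Q \subset P);
  fs_morph : forall Q f, F Q f -> {in Q &, {morph f : x y / x * y}};
  fs_inj : forall Q f, F Q f -> {in Q &, injective f};
  fs_into : forall Q f, F Q f -> f @: Q \subset P;
  fs_ext : forall Q (f g : {ffun gT -> gT}), F Q f -> {in Q, f =1 g} -> F Q g;
  fs_conj : forall (Q : {group gT}) g, Q \subset P -> g \in P -> F Q (conjf g);
  fs_comp : forall Q R (f g : {ffun gT -> gT}), F Q f -> F R g -> f @: Q \subset R ->
              F Q [ffun x => g (f x)];
  (* every morphism is an F-isomorphism onto its image followed by an
     inclusion: the inverse isomorphism lies in F *)
  fs_inv : forall Q (f g : {ffun gT -> gT}), F Q f -> {in Q, cancel f g} -> F (f @: Q) g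
}.

Definition Fconj (gT : finGroupType) (F : fsys gT) (Q R : {set gT}) :=
  [exists f : {ffun gT -> gT}, F Q f && (f @: Q == R)].

Definition fully_normalized (gT : finGroupType) (P : {group gT}) (F : fsys gT) (Q : {set gT}) :=
  forall R : {set gT}, Fconj F Q R -> #|'N_P(R)| <= #|'N_P(Q)|.

Definition fully_centralized (gT : finGroupType) (P : {group gT}) (F : fsys gT) (Q : {set gT}) :=
  forall R : {set gT}, Fconj F Q R -> #|'C_P(R)| <= #|'C_P(Q)|.

Definition Fcentric (gT : finGroupType) (P : {group gT}) (F : fsys gT) (Q : {set gT}) :=
  forall R : {set gT}, Fconj F Q R -> 'C_P(R) \subset R.

(* Aut_F(Q), as a subset of Aut(Q) (automorphisms are permutations of gT
   supported on Q) *)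
Definition AutF (gT : finGroupType) (F : fsys gT) (Q : {group gT}) : {set {perm gT}} :=
  [set a in Aut Q | F Q [ffun x => a x]].

Definition AutP (gT : finGroupType) (P Q : {group gT}) : {set {perm gT}} :=
  conj_aut Q @* 'N_P(Q).
Definition Inn (gT : finGroupType) (Q : {group gT}) : {set {perm gT}} :=
  conj_aut Q @* Q.

Definition OutF (gT : finGroupType) (F : fsys gT) (Q : {group gT}) :=
  AutF F Q / Inn Q.

Definition Nphi (gT : finGroupType) (P Q : {group gT}) (f : {ffun gT -> gT}) : {set gT} :=
  [set g in 'N_P(Q) |
     [exists h in 'N_P(f @: Q), [forall x in Q, f (x ^ g) == f x ^ h]]].

Definition saturated (gT : finGroupType) (p : nat) (P : {group gT}) (F : fsys gT) :=
  [/\ is_fusion_system P F,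
      forall Q : {group gT}, Q \subset P -> fully_normalized P F Q ->
        fully_centralized P F Q /\ p.-Sylow(AutF F Q) (AutP P Q)
    &
      forall (Q : {group gT}) (f : {ffun gT -> gT}), Q \subset P -> F Q f ->
        fully_centralized P F (f @: Q) ->
        exists2 g : {ffun gT -> gT}, F (Nphi P Q f) g & {in Q, g =1 f}].

Definition strongly_p_embedded (p : nat) (aT : finGroupType) (G : {set aT}) (H : {group aT}) :=
  [/\ H \subset G, p %| #|H|, ~~ (p %| #|G : H|), 1 < #|G : H|
    & forall x, x \in G :\: H -> ~~ (p %| #|H :&: H :^ x|)].

Definition essential (gT : finGroupType) (p : nat) (P : {group gT}) (F : fsys gT) (Q : {group gT}) :=
  [/\ Q \subset P, fully_normalized P F Q, Fcentric P F Q
    & exists H : {group coset_of (Inn Q)}, strongly_p_embedded p (OutF F Q) H].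

(* Aut_F(Q/Phi(Q)): the image of Aut_F(Q) in Aut(Q/Phi(Q)), via the action
   induced on the cosets of Phi(Q) by the natural action of Aut(Q) *)
Definition AutFquo (gT : finGroupType) (F : fsys gT) (Q : {group gT}) :
    {set {perm coset_of 'Phi(Q)}} :=
  actperm ([Aut Q] / 'Phi(Q))%act @* AutF F Q.

From HB Require Import structures.
From mathcomp Require Import all_boot all_fingroup all_solvable all_algebra.
From mathcomp Require Import mxrepresentation mxabelem.
Import GRing.Theory.
Set Implicit Arguments. Unset Strict Implicit. Unset Printing Implicit Defensive.
Local Open Scope group_scope.

(* Write Phi = Phi(Q) and V = Q/Phi, an elementary abelian group of order p^r.
   - By Burnside, the automorphisms of Q acting trivially on V form a p-group
     containing Inn(Q).  In Out_F(Q) they give a normal p-subgroup, which is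
     trivial because Out_F(Q) has a strongly p-embedded subgroup; hence
     Out_F(Q) ~ Aut_F(V) by the first isomorphism theorem.
   - V ~ F_p^r, so Aut(V) embeds in GL_r(p) through matrices of automorphisms.
   - As Q is F-centric, N_P(Q)/Q ~ Aut_P(Q)/Inn(Q) <= Out_F(Q) is a p-subgroup
     of GL_r(p): its order is at most p^(r(r-1)/2) (the p-part of |GL_r(p)|) and
     its elements are unipotent, whence the exponent bound.  Saturation makes
     Aut_P(Q) Sylow in Aut_F(Q), so N_P(Q)/Q is nontrivial; this settles r = 2.
   - In M = N_P(Q)/Phi the normal subgroup V of order p^r lies in Z_r(M) and is
     self-centralizing, so L_r(M) centralizes V and lies in V: M/V ~ N_P(Q)/Q
     has class at most r-1.
   The file first develops these general facts (linear algebra over F_p, upper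
   and lower central series, Burnside's theorem, strongly p-embedded subgroups),
   then the fusion-theoretic part, and derives the proposition at the end. *)

Section AutRowSpace.
(* Additive automorphisms of the row space F_p^n are F_p-linear, hence given by
   invertible matrices: Aut(F_p^n) embeds in GL_n(p). *)
Variables (p n' : nat).
Local Notation n := n'.+1.
Local Notation rV := 'rV['F_p]_n.
Local Notation V := [set: rV].
Local Open Scope ring_scope.

Lemma Aut_rV_add (s : {perm rV}) u v : s \in Aut V -> s (u + v) = s u + s v.
Proof. by move=> As; apply: (morphicP (Aut_morphic As)); rewrite inE. Qed.

Lemma Aut_rV_0 (s : {perm rV}) : s \in Aut V -> s 0 = 0.
Proof.
move=> As; have := Aut_rV_add 0 0 As; rewrite addr0.
by move/(congr1 (fun w => w - s 0)); rewrite subrr addrK.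
Qed.

(* Since 'F_p is generated by 1 as an additive group, additivity gives
   F_p-linearity. *)
Lemma Aut_rV_scale (s : {perm rV}) (c : 'F_p) u : s \in Aut V -> s (c *: u) = c *: s u.
Proof.
move=> As; rewrite -[c]natr_Zp !scaler_nat.
elim: (c : nat) => [|k IH]; first by rewrite !mulr0n Aut_rV_0.
by rewrite !mulrS Aut_rV_add // IH.
Qed.

Definition autmx (s : {perm rV}) : 'M['F_p]_n := lin1_mx (fun v => s v).

Lemma autmxE (s : {perm rV}) u : s \in Aut V -> u *m autmx s = s u.
Proof.
move=> As; rewrite /autmx [u in RHS]matrix_sum_delta big_ord1.
have s_sum (I : Type) (r : seq I) (P : pred I) (F : I -> rV) :
    s (\sum_(i <- r | P i) F i) = \sum_(i <- r | P i) s (F i).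
  by apply: (big_morph s) => [x y|]; [apply: Aut_rV_add | apply: Aut_rV_0].
rewrite s_sum; apply/rowP=> i; rewrite mxE summxE.
by apply: eq_bigr => j _; rewrite Aut_rV_scale // !mxE.
Qed.

Lemma autmx_repr : mx_repr (Aut V) autmx.
Proof.
split=> [|x y Ax Ay]; apply/row_matrixP=> i.
  by rewrite !rowE autmxE ?group1 // perm1 mulmx1.
by rewrite !rowE mulmxA !autmxE ?groupM // permM.
Qed.

Canonical autmx_mxrepr := MxRepresentation autmx_repr.

Definition autGL := reprGLm autmx_mxrepr.

Lemma autGL_injm : 'injm autGL.
Proof.
rewrite ker_reprGLm; apply/subsetP=> s /rkerP[As s1]; rewrite inE.
by apply/eqP/permP=> u; rewrite perm1 -autmxE // [autmx s]s1 mulmx1.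
Qed.

End AutRowSpace.

Section Unipotent.
Local Open Scope ring_scope.

(* Over F_p, a matrix A with A^(p^k) = 1 is unipotent: (A - 1)^(p^k) = 0, so
   its minimal polynomial is X^j with j <= n and A^(p^e) = 1 once n <= p^e. *)
Lemma unipotent_exp (p n' : nat) (A : 'M['F_p]_n'.+1) k e :
  prime p -> A ^+ (p ^ k) = 1 -> (n'.+1 <= p ^ e)%N -> A ^+ (p ^ e) = 1.
Proof.
move=> pr_p Ak le_ne.
have chP : p \in [pchar {poly 'F_p}] by rewrite pchar_poly pchar_Fp.
have pnatP m : [pchar {poly 'F_p}].-nat (p ^ m)%N.
  by rewrite (eq_pnat _ (pcharf_eq chP)) pnatX pnat_id // orbT.
have polyE m : ('X - 1) ^+ (p ^ m) = 'X^(p ^ m) - 1 :> {poly 'F_p}.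
  by rewrite exprDn_pchar // exprNn_pchar // expr1n.
set N := A - 1.
have NE m : N ^+ (p ^ m) = A ^+ (p ^ m) - 1.
  have -> : N = horner_mx A ('X - 1) by rewrite rmorphB /= horner_mx_X rmorph1.
  by rewrite -rmorphXn /= polyE rmorphB /= rmorphXn /= horner_mx_X rmorph1.
have Nk : N ^+ (p ^ k) = 0 by rewrite NE Ak subrr.
have dvdm : mxminpoly N %| ('X - 0%:P) ^+ (p ^ k).
  by rewrite subr0 dvd_mxminpoly rmorphXn /= horner_mx_X Nk.
have [j _ eqj] := dvdp_exp_XsubCP dvdm.
have lejn : (j <= n'.+1)%N.
  have : (size (('X - 0%:P) ^+ j : {poly 'F_p}) <= n'.+2)%N.
    rewrite -(eqp_size eqj) -(size_char_poly N); apply: dvdp_leq.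
      by rewrite monic_neq0 // char_poly_monic.
    exact: mxminpoly_dvd_char.
  by rewrite subr0 size_polyXn.
have Nj : N ^+ j = 0.
  have : mxminpoly N %| ('X - 0%:P) ^+ j by rewrite -(eqp_dvdr _ eqj) dvdpp.
  by rewrite subr0 dvd_mxminpoly rmorphXn /= horner_mx_X => /eqP.
apply/eqP; rewrite -subr_eq0 -NE -(subnKC (leq_trans lejn le_ne)) exprD Nj mul0r //.
Qed.

End Unipotent.

Lemma pgroup_GL_exponent p n (K : {group {'GL_n['F_p]}}) :
  prime p -> 0 < n -> p.-group K -> exponent K <= p ^ up_log p n.
Proof.
case: n K => // n' K pr_p _ pK.
apply: dvdn_leq; first by rewrite expn_gt0 prime_gt0.
apply/exponentP=> g Kg; have [k ok] := p_natP (mem_p_elt pK Kg).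
apply: val_inj; rewrite FinRing.val_unitX /=.
apply: (@unipotent_exp p n' _ k) => //; last exact: up_logP (prime_gt1 pr_p).
by rewrite -FinRing.val_unitX -ok expg_order.
Qed.

Lemma pgroup_GL_card p n (K : {group {'GL_n['F_p]}}) :
  prime p -> p.-group K -> #|K| <= p ^ 'C(n, 2).
Proof.
move=> pr_p pK; rewrite (card_pgroup pK) leq_exp2l ?prime_gt1 //.
rewrite -(logn_card_GL_p n pr_p); apply: dvdn_leq_log; first exact: cardG_gt0.
exact: cardSg (subsetT _).
Qed.

(* [Z_(i+j+1)(G), L_(j+1)(G)] <= Z_i(G), by induction on j with the three
   subgroup lemma; for i = 0 it says that L_(j+1) centralizes Z_(j+1). *)
Lemma ucn_lcn_comm j : forall (gT : finGroupType) (G : {group gT}) i,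
  [~: 'Z_(i + j.+1)(G), 'L_j.+1(G)] \subset 'Z_i(G).
Proof.
elim: j => [|j IH] gT G i; first by rewrite addn1; apply: ucn_comm.
have cZL (hT : finGroupType) (H : {group hT}) : [~: 'Z_j.+2(H), 'L_j.+2(H)] \subset [1].
  rewrite lcnSn commGC; apply/trivgP; apply: three_subgroup.
    apply/trivgP; rewrite -(ucn0 H); apply: subset_trans (IH hT H 0); rewrite add0n.
    by apply: commSg; rewrite commGC; apply: ucn_comm.
  apply/trivgP; rewrite -(ucn0 H); apply: subset_trans (ucn_comm 0 H).
  by apply: commSg; rewrite -(add1n j.+1); apply: IH.
have nZG : G \subset 'N('Z_i(G)) := ucn_norm i G.
have sRG : [~: 'Z_(i + j.+2)(G), 'L_j.+2(G)] \subset G.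
  by rewrite comm_subG ?ucn_sub ?lcn_sub.
rewrite -quotient_sub1 ?(subset_trans sRG) //.
rewrite quotientR ?(subset_trans (ucn_sub _ _)) ?(subset_trans (lcn_sub _ _)) //.
rewrite addnC quotient_ucn_add.
have eL := morphim_lcn (coset_morphism [group of 'Z_i(G)]) j.+2 nZG.
by have := cZL _ (G / 'Z_i(G))%G; rewrite -eL.
Qed.

Lemma normal_ucn_step (gT : finGroupType) (p : nat) (M V : {group gT}) i :
  prime p -> p.-group M -> V <| M -> ~~ (V \subset 'Z_i.+1(M)) ->
  logn p #|V :&: 'Z_i(M)| < logn p #|V :&: 'Z_i.+1(M)|.
Proof.
move=> pr_p pM nsVM nVZ; have [sVM _] := andP nsVM.
have nVZi : ~~ (V \subset 'Z_i(M)).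
  by apply: contra nVZ => sVZ; apply: subset_trans sVZ (ucn_subS _ _).
have nZM : M \subset 'N('Z_i(M)) := ucn_norm i M.
have nilM : nilpotent (M / 'Z_i(M)) by apply: pgroup_nil (quotient_pgroup _ pM).
have ntV : V / 'Z_i(M) != 1.
  by rewrite -subG1 quotient_sub1 //; apply: subset_trans sVM nZM.
have := meet_center_nil nilM (quotient_normal _ nsVM) ntV.
case/trivgPn=> w /setIP[/morphimP[v Nv Vv ->] Zw] ntw.
have Zv : v \in 'Z_i.+1(M) by rewrite ucnSn; apply: mem_morphpre.
have nZv : v \notin 'Z_i(M) by apply/negP => Zv'; case/eqP: ntw; apply: coset_id.
apply: properG_ltn_log (pgroupS (subsetIl _ _) (pgroupS sVM pM)) _.
rewrite properEneq setIS ?ucn_subS // andbT; apply/eqP=> eqVZ.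
have : v \in V :&: 'Z_i.+1(M) by rewrite inE Vv.
by rewrite -eqVZ inE (negPf nZv) andbF.
Qed.

Lemma normal_sub_ucn (gT : finGroupType) (p : nat) (M V : {group gT}) :
  prime p -> p.-group M -> V <| M -> V \subset 'Z_(logn p #|V|)(M).
Proof.
move=> pr_p pM nsVM; have pV := pgroupS (normal_sub nsVM) pM.
have grow i : (V \subset 'Z_i(M)) || (i <= logn p #|V :&: 'Z_i(M)|).
  elim: i => [|i IH]; first by rewrite orbT.
  case: (boolP (V \subset 'Z_i.+1(M))) => //= nVZ.
  have nVZi : ~~ (V \subset 'Z_i(M)).
    by apply: contra nVZ => sVZ; apply: subset_trans sVZ (ucn_subS _ _).
  rewrite (negPf nVZi) /= in IH.
  exact: leq_ltn_trans IH (normal_ucn_step pr_p pM nsVM nVZ).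
set k := logn p #|V|; case/orP: (grow k) => // le_k.
have pVZ : p.-group (V :&: 'Z_k(M)) := pgroupS (subsetIl _ _) pV.
have leV : #|V| <= #|V :&: 'Z_k(M)|.
  by rewrite {1}(card_pgroup pV) (card_pgroup pVZ) leq_exp2l ?prime_gt1.
by apply/setIidPl/eqP; rewrite eqEcard subsetIl leV.
Qed.

Lemma logn_card_gt0 (gT : finGroupType) (p : nat) (G : {group gT}) :
  p.-group G -> G :!=: 1 -> 0 < logn p #|G|.
Proof.
move=> pG ntG; have lt1G : 1%G \proper G by rewrite proper1G.
by have := properG_ltn_log pG lt1G; rewrite cards1 logn1.
Qed.

(* If V is a nontrivial self-centralizing normal subgroup of order p^r of the
   p-group M, then M/V has nilpotency class at most r-1: L_r(M) centralizes
   V <= Z_r(M), hence lies in C_M(V) <= V. *)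
Lemma nil_class_quotient_selfcent (gT : finGroupType) (p : nat) (M V : {group gT}) :
  prime p -> p.-group M -> V <| M -> V :!=: 1 -> 'C_M(V) \subset V ->
  nil_class (M / V) <= (logn p #|V|).-1.
Proof.
move=> pr_p pM nsVM ntV sCV; have [sVM nVM] := andP nsVM.
have r_gt0 := logn_card_gt0 (pgroupS sVM pM) ntV.
have sVZ := normal_sub_ucn pr_p pM nsVM.
have sLV : 'L_(logn p #|V|)(M) \subset V.
  apply: subset_trans sCV; rewrite subsetI lcn_sub /=.
  have := ucn_lcn_comm (logn p #|V|).-1 M 0; rewrite add0n prednK // ucn0.
  by move/(subset_trans (commSg _ sVZ))/trivgP/commG1P; rewrite centsC.
apply/lcn_nil_classP; first exact: pgroup_nil (quotient_pgroup _ pM).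
rewrite prednK // -morphim_lcn //; apply/trivgP.
by rewrite quotient_sub1 // (subset_trans (lcn_sub _ _) nVM).
Qed.

(* A group with a strongly p-embedded subgroup H has no nontrivial normal
   p-subgroup: O_p(G) lies in every Sylow subgroup, hence in H and in the
   conjugate H^x for some x outside H, whose intersection is a p'-group. *)
Lemma strongly_p_embedded_pcore1 (aT : finGroupType) (p : nat) (G H : {group aT}) :
  prime p -> strongly_p_embedded p G H -> 'O_p(G) = 1.
Proof.
move=> pr_p [sHG pH npGH ltGH Hx].
have [S sylS] := Sylow_exists p H; have sSH := pHall_sub sylS.
have sylSG : p.-Sylow(G) S.
  rewrite /pHall (subset_trans sSH sHG) (pHall_pgroup sylS) /=.
  rewrite -(Lagrange_index sHG sSH) pnatM p'natE // npGH /=.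
  by case/and3P: sylS.
have [x /setDP[Gx nHx]] : exists x, x \in G :\: H.
  apply/set0Pn; rewrite setD_eq0; apply: contraTN ltGH => sGH.
  by rewrite -indexg_eq1 in sGH; rewrite (eqP sGH).
have sOH : 'O_p(G) \subset H := subset_trans (pcore_sub_Hall sylSG) sSH.
have sOHx : 'O_p(G) \subset H :&: H :^ x.
  rewrite subsetI sOH -(normP (subsetP (normal_norm (pcore_normal p G)) x Gx)).
  by rewrite conjSg.
apply/eqP; rewrite trivg_card1; apply/eqP; apply: (pnat_1 (pcore_pgroup _ _)).
by apply: pnat_dvd (cardSg sOHx) _; rewrite p'natE // Hx // inE Gx nHx.
Qed.

Lemma Aut_fix_group_set (gT : finGroupType) (G : {group gT}) (a : {perm gT}) :
  a \in Aut G -> group_set [set y in G | a y == y].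
Proof.
move=> Aa; apply/group_setP; split.
  by rewrite inE group1 -{1}(autmE Aa) morph1 eqxx.
move=> x y; rewrite !inE => /andP[Gx /eqP ax] /andP[Gy /eqP ay].
by rewrite groupM // -{1}(autmE Aa) morphM //= (autmE Aa) ax ay.
Qed.

(* The inner automorphisms form a normal subgroup of Aut(Q):
   a c_y a^-1 = c_(a y). *)
Lemma Inn_normal (gT : finGroupType) (Q : {group gT}) : Inn Q <| Aut Q.
Proof.
rewrite /normal Aut_conj_aut; apply/subsetP=> a Aa; rewrite inE.
apply/subsetP=> _ /imsetP[s /morphimP[y Ny Qy ->] ->].
have Qay : a y \in Q by rewrite Aut_closed.
have -> : conj_aut Q y ^ a = conj_aut Q (a y).
  apply: (eq_Aut (groupJ _ Aa) (Aut_aut _ _)); first exact: Aut_aut.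
  move=> x Qx; have Qax : a^-1 x \in Q by rewrite Aut_closed ?groupV.
  rewrite conjgE !permM conj_autE // ?conj_autE //.
  rewrite -(autmE Aa) morphJ // (autmE Aa); congr (_ ^ _).
  by rewrite /= (autmE Aa) permKV.
by apply: mem_morphim => //; apply: (subsetP (normG Q)).
Qed.

Section AutFrattini.
Variables (gT : finGroupType) (p : nat) (Q : {group gT}).
Hypotheses (pr_p : prime p) (pQ : p.-group Q).

Local Notation Phi := 'Phi(Q).
Local Notation rho := (actperm ([Aut Q] / 'Phi(Q))%act).

Let nQPhi : Q \subset 'N(Phi). Proof. exact: normal_norm (Phi_normal Q). Qed.
Let pPhi : p.-group Phi. Proof. exact: pgroupS (Phi_sub Q) pQ. Qed.

Lemma Aut_qact_dom : Aut Q \subset qact_dom [Aut Q] Phi.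
Proof. by rewrite qact_domE ?Phi_sub // acts_char ?Phi_char. Qed.

Lemma rhoE a x : a \in Aut Q -> x \in 'N(Phi) -> rho a (coset Phi x) = coset Phi (a x).
Proof. by move=> Aa Nx; rewrite actpermE qactE // (subsetP Aut_qact_dom). Qed.

Lemma ker_rhoP a : a \in Aut Q ->
  reflect (forall x, x \in Q -> coset Phi (a x) = coset Phi x) (a \in 'ker rho).
Proof.
move=> Aa; apply: (iffP (kerP _ (subsetP Aut_qact_dom a Aa))) => [r1 x Qx | fixV].
  by rewrite -rhoE ?(subsetP nQPhi) // r1 perm1.
apply/permP=> c; rewrite perm1; case: (cosetP c) => x Nx ->.
rewrite rhoE //; case Qx: (x \in Q); first exact: fixV.
by rewrite (out_Aut Aa) ?Qx.
Qed.

Lemma Inn_sub_ker_rho : Inn Q \subset 'ker rho.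
Proof.
apply/subsetP=> _ /morphimP[y Ny Qy ->].
have cQb : abelian (Q / Phi) := abelem_abelian (Phi_quotient_abelem pQ).
apply/(ker_rhoP (Aut_aut _ _)) => x Qx; rewrite conj_autE //.
rewrite morphJ ?(subsetP nQPhi) //; apply/conjg_fixP/commgP.
by apply: (centsP cQb); apply: mem_quotient.
Qed.

(* An automorphism of prime order q <> p acting trivially on Q/Phi(Q) fixes a
   point in each coset Phi x: the coset has p-power order, not divisible by q,
   so the q-group <[a]> acting on it has a fixed point. *)
Lemma ker_rho_fix_coset a (q : nat) x : a \in 'ker_(Aut Q) rho -> q.-group <[a]> ->
  ~~ (q %| #|Phi|) -> x \in Q -> exists2 y, y \in Phi :* x & a y = y.
Proof.
case/setIP=> Aa /(ker_rhoP Aa) fixV qa nq_Phi Qx; have Nx := subsetP nQPhi x Qx.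
have actS : [acts <[a]>, on Phi :* x | 'P].
  rewrite cycle_subG; apply/astabsP=> y; rewrite /= apermE.
  case Qy: (y \in Q); last by rewrite (out_Aut Aa) ?Qy.
  have Nay : a y \in 'N(Phi) by rewrite (subsetP nQPhi) ?Aut_closed.
  have Ny := subsetP nQPhi y Qy.
  by apply/(rcoset_kercosetP Nay Nx)/(rcoset_kercosetP Ny Nx); rewrite fixV.
have := pgroup_fix_mod qa actS; rewrite card_rcoset.
case: (set_0Vmem 'Fix_(Phi :* x | 'P)(<[a]>)) => [-> | [y]].
  by rewrite cards0 mod0n => qPhi; rewrite /dvdn qPhi in nq_Phi.
case/setIP=> Sy /afixP/(_ a (cycle_id a)); rewrite /= apermE => ay _.
by exists y.
Qed.

(* If a had prime order q <> p, its fixed points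
   would meet every coset of Phi(Q), hence generate Q modulo Phi(Q), hence
   generate Q: then a = 1. *)
Lemma Burnside_ker_rho : p.-group ('ker_(Aut Q) rho).
Proof.
apply/pgroupP=> q pr_q qd; have [a Ka oa] := Cauchy pr_q qd.
have Aa : a \in Aut Q := subsetP (subsetIl _ _) a Ka.
apply/idPn => nqp.
have qa : q.-group <[a]> by rewrite /pgroup -orderE oa pnat_id.
have nq_Phi : ~~ (q %| #|Phi|) by apply: contra nqp; apply: (pgroupP pPhi).
pose Fix := group (Aut_fix_group_set Aa).
have defQ : Phi <*> Fix = Q.
  apply/eqP; rewrite eqEsubset join_subG Phi_sub.
  have -> /= : (Fix : {set gT}) \subset Q.
    by apply/subsetP=> y; rewrite inE => /andP[].
  apply/subsetP=> x Qx.
  have [y /rcosetP[z Phz ->] ayz] := ker_rho_fix_coset Ka qa nq_Phi Qx.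
  have Qz := subsetP (Phi_sub Q) z Phz.
  have Fzx : z * x \in Fix by rewrite inE groupM // ayz eqxx.
  rewrite -(mulKg z x); apply: groupM; last exact: (subsetP (joing_subr _ _)).
  by apply: (subsetP (joing_subl _ _)); rewrite groupV.
have a1 : a = 1.
  apply: (eq_Aut Aa (group1 _)) => x; rewrite perm1 -(Phi_nongen defQ) genGid.
  by rewrite inE => /andP[_ /eqP].
by rewrite a1 order1 in oa; rewrite -oa in pr_q.
Qed.

Lemma Frattini_quotient_neq1 : Q :!=: 1 -> Q / Phi != 1.
Proof.
move=> ntQ; rewrite -subG1 quotient_sub1 //.
exact: proper_subn (Phi_proper ntQ).
Qed.

Lemma Frattini_rank_gt0 : Q :!=: 1 -> 0 < logn p #|Q : Phi|.
Proof.
move=> ntQ; rewrite -card_quotient //.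
exact: logn_card_gt0 (quotient_pgroup _ pQ) (Frattini_quotient_neq1 ntQ).
Qed.

(* Every group of automorphisms of Q/Phi(Q) is isomorphic to a subgroup of
   GL_r(p), r = logn p |Q : Phi(Q)|, since Q/Phi(Q) ~ F_p^r. *)
Lemma Aut_Frattini_quotient_GL (B : {group {perm coset_of Phi}}) :
  Q :!=: 1 -> B \subset Aut (Q / Phi) ->
  exists K : {group {'GL_(logn p #|Q : Phi|)['F_p]}}, B \isog K.
Proof.
move=> ntQ sBA; set r := logn p #|Q : Phi|.
have r_gt0 : 0 < r := Frattini_rank_gt0 ntQ.
have QbrV : Q / Phi \isog [set: 'rV['F_p]_(r.-1.+1)].
  rewrite (isog_abelem_card _ (Phi_quotient_abelem pQ)) mx_Fp_abelem //=.
  rewrite cardsT card_mx card_Fp // mul1n prednK //.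
  by rewrite (card_pgroup (quotient_pgroup _ pQ)) card_quotient.
have /isogP[f injf imf] := QbrV.
pose g := Aut_isom injf (subxx (Q / Phi)).
have im_g : g @* Aut (Q / Phi) = Aut [set: 'rV['F_p]_(r.-1.+1)].
  by rewrite im_Aut_isom imf.
exists (@autGL p r.-1 @* (g @* B))%G.
apply: isog_trans (sub_isog sBA (injm_Aut_isom injf (subxx (Q / Phi)))) _.
apply: sub_isog; last exact: autGL_injm.
by have := morphimS g sBA; rewrite im_g.
Qed.

End AutFrattini.

Section FusionAut.
Variables (gT : finGroupType) (P : {group gT}) (F : fsys gT) (Q : {group gT}).
Hypotheses (fsF : is_fusion_system P F) (sQP : Q \subset P).

Local Notation Phi := 'Phi(Q).
Local Notation rho := (actperm ([Aut Q] / 'Phi(Q))%act).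

Lemma AutF_sub : AutF F Q \subset Aut Q.
Proof. by apply/subsetP=> a; rewrite inE => /andP[]. Qed.

Lemma AutFP a : (a \in AutF F Q) = (a \in Aut Q) && F Q [ffun x => a x].
Proof. by rewrite /AutF in_set. Qed.

Lemma conj_autF g : g \in 'N_P(Q) -> conj_aut Q g \in AutF F Q.
Proof.
case/setIP=> Pg Ng; rewrite AutFP Aut_aut /=.
apply: (fs_ext fsF (f := conjf g)); first exact: (fs_conj fsF).
by move=> x Qx; rewrite !ffunE norm_conj_autE.
Qed.

Lemma AutF_group_set : group_set (AutF F Q).
Proof.
apply/group_setP; split.
  have N1 : 1 \in 'N_P(Q) by rewrite group1.
  by have := conj_autF N1; rewrite morph1.
move=> a b; rewrite !AutFP => /andP[Aa Fa] /andP[Ab Fb]; rewrite groupM //=.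
have sQa : [ffun x => a x] @: Q \subset Q.
  by apply/subsetP=> _ /imsetP[x Qx ->]; rewrite ffunE Aut_closed.
apply: (fs_ext fsF (fs_comp fsF Fa Fb sQa)) => x _.
by rewrite !ffunE permM.
Qed.
Canonical AutF_group := group AutF_group_set.

Lemma AutP_sub : AutP P Q \subset AutF F Q.
Proof. by apply/subsetP=> _ /morphimP[y Ny NPy ->]; apply: conj_autF. Qed.

Lemma Inn_sub : Inn Q \subset AutF F Q.
Proof.
apply/subsetP=> _ /morphimP[y Ny Qy ->]; apply: conj_autF.
by rewrite inE (subsetP sQP) ?Ny.
Qed.

Lemma AutF_nInn : AutF F Q \subset 'N(Inn Q).
Proof. exact: subset_trans AutF_sub (normal_norm (Inn_normal Q)). Qed.

Lemma AutF_qact_dom : AutF F Q \subset qact_dom [Aut Q] Phi.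
Proof. exact: subset_trans AutF_sub (Aut_qact_dom Q). Qed.

Lemma AutFquo_sub : AutFquo F Q \subset Aut (Q / Phi).
Proof.
apply: subset_trans (morphimS _ AutF_qact_dom) _.
exact: im_actperm_Aut.
Qed.

(* Q is F-conjugate to itself (via the identity), so an F-centric Q contains
   its centralizer in P. *)
Lemma Fcentric_cent_sub : Fcentric P F Q -> 'C_P(Q) \subset Q.
Proof.
move=> cQ; apply: cQ; apply/existsP; exists [ffun x => x].
rewrite (@eq_imset _ _ _ id) ?imset_id ?eqxx ?andbT => [|x]; last by rewrite ffunE.
apply: (fs_ext fsF (f := conjf 1)); first by apply: (fs_conj fsF); rewrite ?group1.
by move=> x _; rewrite !ffunE conjg1.
Qed.

Definition outconj g := coset (Inn Q) (conj_aut Q g).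

Lemma outconjM : {in 'N_P(Q) &, {morph outconj : x y / x * y}}.
Proof.
have nInn g : g \in 'N_P(Q) -> conj_aut Q g \in 'N(Inn Q).
  by move=> NPg; rewrite (subsetP AutF_nInn) ?conj_autF.
have sNPN : 'N_P(Q) \subset 'N(Q) := subsetIr _ _.
move=> x y NPx NPy; rewrite /outconj morphM ?(subsetP sNPN) //.
by rewrite morphM ?nInn.
Qed.
Canonical outconj_morphism := Morphism outconjM.

(* Its kernel is Q C_P(Q), that is Q when Q is F-centric. *)
Lemma ker_outconj : Fcentric P F Q -> 'ker outconj_morphism = Q.
Proof.
move=> centQ; have sNPN : 'N_P(Q) \subset 'N(Q) := subsetIr _ _.
apply/eqP; rewrite eqEsubset; apply/andP; split; last first.
  apply/subsetP=> y Qy; have NPy : y \in 'N_P(Q).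
    by rewrite inE (subsetP sQP) // (subsetP (normG Q)).
  apply/kerP => //=; rewrite /outconj coset_id //.
  by apply: mem_morphim => //; apply: (subsetP (normG Q)).
apply/subsetP=> x Kx; have NPx : x \in 'N_P(Q) := dom_ker Kx.
have : conj_aut Q x \in Inn Q.
  by apply: coset_idr (mker Kx); rewrite (subsetP AutF_nInn) ?conj_autF.
case/morphimP=> y Ny Qy exy.
have NPy : y \in 'N_P(Q) by rewrite inE (subsetP sQP) // Ny.
have Nx := subsetP sNPN x NPx.
have : x * y^-1 \in 'C_P(Q).
  rewrite inE groupM ?groupV ?(subsetP (subsetIl _ _) _ NPx) ?(subsetP sQP) //=.
  rewrite -ker_conj_aut; apply/kerP; first by rewrite groupM ?groupV.
  by rewrite morphM ?groupV // morphV //= exy mulgV.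
move/(subsetP (Fcentric_cent_sub centQ)) => Qxy.
by rewrite -(mulgKV y x) groupM.
Qed.

Lemma im_outconj : outconj_morphism @* 'N_P(Q) = AutP P Q / Inn Q.
Proof.
have nInnP := subset_trans AutP_sub AutF_nInn.
rewrite morphimEdom /AutP /quotient morphimEsub ?nInnP //.
by rewrite [conj_aut Q @* _]morphimEsub ?subsetIr // -imset_comp.
Qed.

Lemma NQ_isog_OutP : Fcentric P F Q -> 'N_P(Q) / Q \isog AutP P Q / Inn Q.
Proof.
by move=> centQ; have := first_isog outconj_morphism; rewrite ker_outconj ?im_outconj.
Qed.

Section Essential.
Variable p : nat.
Hypotheses (pr_p : prime p) (pP : p.-group P) (satF : saturated p P F)
  (essQ : essential p P F Q).

Local Notation r := (logn p #|Q : 'Phi(Q)|).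

Let centQ : Fcentric P F Q. Proof. by case: essQ. Qed.
Let pQ : p.-group Q. Proof. exact: pgroupS sQP pP. Qed.

(* The kernel of Aut_F(Q) -> Aut(Q/Phi(Q)) is exactly Inn(Q): modulo Inn(Q)
   it is a normal p-subgroup of Out_F(Q) by Burnside, and Out_F(Q) has no
   nontrivial normal p-subgroup since it has a strongly p-embedded subgroup. *)
Lemma ker_AutF_rho : 'ker_(AutF F Q) rho = Inn Q.
Proof.
apply/eqP; rewrite eqEsubset andbC subsetI Inn_sub (Inn_sub_ker_rho pQ) /=.
have sKN : 'ker_(AutF F Q) rho \subset 'N(Inn Q).
  exact: subset_trans (subsetIl _ _) AutF_nInn.
rewrite -quotient_sub1 //; have [_ _ _ [H speH]] := essQ.
rewrite -(strongly_p_embedded_pcore1 pr_p speH); apply: pcore_max.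
  apply/quotient_pgroup/(pgroupS _ (Burnside_ker_rho pQ)).
  exact: setSI AutF_sub.
apply: quotient_normal.
by have := ker_normal (restrm AutF_qact_dom rho); rewrite ker_restrm.
Qed.

Theorem OutF_isog_AutFquo : OutF F Q \isog AutFquo F Q.
Proof.
rewrite /OutF /AutFquo -ker_AutF_rho.
exact: first_isog_loc AutF_qact_dom.
Qed.

(* Q <> 1: otherwise Out_F(Q) = 1 would have no subgroup of order
   divisible by p. *)
Lemma essential_neq1 : Q :!=: 1.
Proof.
apply/negP=> /eqP Q1; have [_ _ _ [H [sHO pH _ _ _]]] := essQ.
have sA1 : AutF F Q \subset [1] by rewrite -(Aut1 gT) -Q1 AutF_sub.
have : OutF F Q \subset [1] by move/(quotientS (Inn Q)): sA1; rewrite quotient1.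
move/(subset_trans sHO)/trivgP => H1.
by move: pH; rewrite H1 cards1 dvdn1 => /eqP p1; move: pr_p; rewrite p1.
Qed.

Theorem AutFquo_embeds_GL : exists K : {group {'GL_r['F_p]}}, AutFquo F Q \isog K.
Proof. exact: (Aut_Frattini_quotient_GL pr_p pQ essential_neq1 AutFquo_sub). Qed.

(* N_P(Q)/Q ~ Out_P(Q) <= Out_F(Q) ~ Aut_F(Q/Phi(Q)) <= Aut(Q/Phi(Q)), so
   N_P(Q)/Q embeds in GL_r(p). *)
Lemma NQ_embeds_GL : exists K : {group {'GL_r['F_p]}}, 'N_P(Q) / Q \isog K.
Proof.
have /isogP[f injf imf] := OutF_isog_AutFquo.
have sOP : AutP P Q / Inn Q \subset OutF F Q := quotientS _ AutP_sub.
have sfA : f @* (AutP P Q / Inn Q) \subset Aut (Q / Phi).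
  by apply: subset_trans (morphimS _ sOP) _; rewrite imf AutFquo_sub.
have [K isoK] := Aut_Frattini_quotient_GL pr_p pQ essential_neq1 sfA.
exists K; apply: isog_trans (NQ_isog_OutP centQ) _.
exact: isog_trans (sub_isog sOP injf) isoK.
Qed.

(* N_P(Q)/Q is nontrivial: by saturation Out_P(Q) is a Sylow p-subgroup of
   Out_F(Q), whose order is divisible by p. *)
Lemma NQ_nontrivial : 1 < #|'N_P(Q) / Q|.
Proof.
rewrite (card_isog (NQ_isog_OutP centQ)).
have [_ fnQ _ [H [sHO pH _ _ _]]] := essQ; have [_ sylowF _] := satF.
have [_ sylA] := sylowF Q sQP fnQ.
have := quotient_pHall (subset_trans AutP_sub AutF_nInn) sylA.
move/card_Hall ->; rewrite p_part_gt1 mem_primes pr_p cardG_gt0 /=.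
exact: dvdn_trans pH (cardSg sHO).
Qed.

(* In N_P(Q)/Phi(Q) the subgroup Q/Phi(Q) is self-centralizing: an element
   of N_P(Q) centralizing Q/Phi(Q) induces an automorphism in the kernel of
   rho, hence an inner one, hence lies in Q because Q is F-centric. *)
Lemma Frattini_quotient_selfcent : 'C_('N_P(Q) / Phi)(Q / Phi) \subset Q / Phi.
Proof.
have nQPhi : Q \subset 'N(Phi) := normal_norm (Phi_normal Q).
apply/subsetP=> _ /setIP[/morphimP[x Nx NPx ->] cVx].
have NQx := subsetP (subsetIr P _) x NPx.
have kx : conj_aut Q x \in 'ker rho.
  apply/(ker_rhoP (Aut_aut _ _)) => y Qy; rewrite norm_conj_autE //.
  rewrite morphJ ?Nx ?(subsetP nQPhi y Qy) //; apply/conjg_fixP/commgP.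
  by apply: commute_sym; apply: (centP cVx); apply: mem_quotient.
have Ix : conj_aut Q x \in Inn Q by rewrite -ker_AutF_rho inE conj_autF.
have : x \in 'ker outconj_morphism by apply/kerP => //=; rewrite /outconj coset_id.
by rewrite ker_outconj // => Qx; apply: mem_quotient.
Qed.

(* The class bound: apply nil_class_quotient_selfcent to Q/Phi(Q) in
   N_P(Q)/Phi(Q), and (N_P(Q)/Phi(Q))/(Q/Phi(Q)) ~ N_P(Q)/Q. *)
Lemma nil_class_NQ : nil_class ('N_P(Q) / Q) <= r.-1.
Proof.
have nsQN : Q <| 'N_P(Q) by rewrite normal_subnorm.
have nsPhiN : Phi <| 'N_P(Q) := char_normal_trans (Phi_char Q) nsQN.
rewrite -(isog_nil_class (third_isog (Phi_sub Q) nsPhiN nsQN)).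
rewrite -card_quotient ?normal_norm ?Phi_normal //.
apply: nil_class_quotient_selfcent pr_p _ _ _ Frattini_quotient_selfcent.
- exact: quotient_pgroup (pgroupS (subsetIl _ _) pP).
- exact: quotient_normal.
- exact: Frattini_quotient_neq1 essential_neq1.
Qed.

End Essential.

End FusionAut.

Theorem proposition2p2 (gT : finGroupType) (p : nat) (P : {group gT})
    (F : fsys gT) (Q : {group gT}) (r : nat) :
  prime p -> p.-group P -> saturated p P F -> essential p P F Q ->
  r = logn p #|Q : 'Phi(Q)| ->
  [/\ OutF F Q \isog AutFquo F Q,
      (exists K : {group {'GL_r['F_p]}}, AutFquo F Q \isog K),
      (#|'N_P(Q) / Q| <= p ^ ((r * r.-1) %/ 2))%N,
      (nil_class ('N_P(Q) / Q) <= r.-1)%N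
    & [/\ (exponent ('N_P(Q) / Q) <= p ^ up_log p r)%N
        & r = 2 -> #|'N_P(Q) / Q| = p]].
Proof.
move=> pr_p pP satF essQ ->{r}; set r := logn p _.
have fsF : is_fusion_system P F by case: satF.
have [sQP _ _ _] := essQ; have pQ := pgroupS sQP pP.
have ntQ : Q :!=: 1 := essential_neq1 pr_p essQ.
have pNQ : p.-group ('N_P(Q) / Q) by rewrite quotient_pgroup ?(pgroupS (subsetIl _ _)).
have [K isoK] := NQ_embeds_GL fsF sQP pr_p pP essQ.
have pK : p.-group K by rewrite -(isog_pgroup p isoK).
have cardNQ : #|'N_P(Q) / Q| <= p ^ ((r * r.-1) %/ 2).
  by rewrite (card_isog isoK) divn2 -bin2 pgroup_GL_card.
split=> //.
- exact: (OutF_isog_AutFquo fsF sQP pr_p pP essQ).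
- exact: (AutFquo_embeds_GL fsF sQP pr_p pP essQ).
- exact: (nil_class_NQ fsF sQP pr_p pP essQ).
split=> [|r2].
  by rewrite (exponent_isog isoK) pgroup_GL_exponent ?Frattini_rank_gt0.
have ntNQ : 'N_P(Q) / Q != 1 by rewrite -cardG_gt1 (NQ_nontrivial fsF sQP pr_p satF essQ).
have [_ p_dvd_NQ _] := pgroup_pdiv pNQ ntNQ.
apply/eqP; rewrite eqn_leq (dvdn_leq (cardG_gt0 _) p_dvd_NQ) andbT.
by move: cardNQ; rewrite r2 (_ : (2 * 2.-1) %/ 2 = 1)%N // expn1.
Qed.
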